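(* Let $M,N\ge3$ be integers with $M$ divisible by $(7^{N+1})!$. For $1\le k\le N$ let $I_k$ be the sequence consisting of $N-k+1$ batches of $M$ identical items each, where the batches have item sizes $\frac1{7^N},\frac1{7^{N-1}},\dots,\frac1{7^k}$ in this order. Then $\mathrm{OPT}(I_k)\le\frac{7M}{6(7^k+1)}$ for every $1\le k\le N$.
   Context: Ordered Open End Bin Packing: a sequence of items with sizes in $(0,1]$ must be packed into bins in sequence order, where an item may be added to a bin only if the bin's current total size is strictly below $1$; equivalently, in each bin the total size of all items except the one appearing last in the sequence is strictly below $1$. $\mathrm{OPT}(I)$ is the minimum number of bins of such a packing of the sequence $I$. *)

From mathcomp Require Import all_boot all_order all_algebra.
Set Implicit Arguments. Unset Strict Implicit. Unset Printing Implicit Defensive.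
Import Order.TTheory GRing.Theory Num.Theory.
Local Open Scope ring_scope.

(* An instance is a sequence s of item sizes (rationals in (0,1]).
   A packing into m bins assigns item i (position in the sequence) to bin
   a i : 'I_m.  Items are packed in sequence order: item i may be added to
   bin a i only if the current total size of that bin, i.e. the sum of the
   sizes of the earlier items j < i with a j = a i, is strictly below 1. *)
Definition valid_packing (s : seq rat) (m : nat)
    (a : {ffun 'I_(size s) -> 'I_m}) : bool :=
  [forall i : 'I_(size s),
     \sum_(j < size s | (j < i)%N && (a j == a i)) s`_j < 1].

Definition packable (s : seq rat) (m : nat) : bool :=
  [exists a : {ffun 'I_(size s) -> 'I_m}, valid_packing a].

Lemma packable_size (s : seq rat) : packable s (size s).
Proof.
apply/existsP; exists [ffun i => i]; apply/forallP => i.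
rewrite big1 ?ltr01 // => j /andP [Hj] /eqP; rewrite !ffunE => Hji.
by move: Hj; rewrite Hji ltnn.
Qed.

Lemma ex_packable (s : seq rat) : exists m, packable s m.
Proof. by exists (size s); apply: packable_size. Qed.

Definition OPT (s : seq rat) : nat := ex_minn (@ex_packable s).

Definition batch_seq (M N k : nat) : seq rat :=
  flatten [seq nseq M ((7%:R ^+ e)^-1 : rat) | e <- rev (iota k (N - k + 1))].

(* Write k = j + 1 and G = 7^j.  Since 6(7G + 1) <= 7^(N+1), it divides M, say
   M = 6Q(7G + 1), and 7Q = 7M / (6(7^k + 1)) bins suffice.  Each batch but the
   last is dealt as 6G round-robin rounds over all 7Q bins followed by 6 rounds
   over the first Q bins; the last batch, of items of size x = 7^-k, as 6G rounds
   over all bins followed by one item for each of the other 6Q bins.  Six times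
   the sum of the earlier item sizes is below x and 7Gx = 1, so every bin ends up
   with load below 1 + x; as every bin receives an item of size x at or after any
   of its items, each item is added to a bin of load below 1. *)
From mathcomp Require Import all_boot all_order all_algebra.
From mathcomp Require Import zify lra.
Import Order.TTheory GRing.Theory Num.Theory.
Local Open Scope ring_scope.

Definition bin_load (s : seq rat) (a : seq nat) (t : nat) : rat :=
  \sum_(z <- zip s a | z.2 == t) z.1.

Lemma bin_loadE (s : seq rat) (a : seq nat) (t : nat) : size s = size a ->
  bin_load s a t = \sum_(0 <= j < size s | nth 0%N a j == t) s`_j.
Proof.
move=> eq_sz; rewrite /bin_load (big_nth (0, 0%N)) size_zip -eq_sz minnn.
rewrite big_mkcond [RHS]big_mkcond; apply: eq_big_nat => j /andP [_ lt_j].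
by rewrite nth_zip.
Qed.

Lemma bin_load_cat (s1 s2 : seq rat) (a1 a2 : seq nat) (t : nat) :
  size s1 = size a1 ->
  bin_load (s1 ++ s2) (a1 ++ a2) t = bin_load s1 a1 t + bin_load s2 a2 t.
Proof. by move=> eq_sz; rewrite /bin_load zip_cat // big_cat. Qed.

Lemma bin_load_nseq (w : rat) (a : seq nat) (t : nat) :
  bin_load (nseq (size a) w) a t = w * (count_mem t a)%:R.
Proof.
elim: a => [|b a IH]; first by rewrite /bin_load big_nil mulr0.
rewrite /bin_load /= big_cons /= -/(bin_load _ _ _) IH natrD mulrDr.
by case: (b == t); rewrite ?mulr1 ?mulr0 ?add0r.
Qed.

Lemma bin_load_ge0 (s : seq rat) (a : seq nat) (t : nat) :
  (forall w, w \in s -> 0 <= w) -> 0 <= bin_load s a t.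
Proof.
elim: s a => [|w s IH] [|b a] s_ge0; rewrite /bin_load ?big_nil //= big_cons.
have w_ge0 : 0 <= w by apply: s_ge0; rewrite mem_head.
have rest_ge0 : 0 <= bin_load s a t.
  by apply: IH => v v_in; apply: s_ge0; rewrite in_cons v_in orbT.
by case: ifP => _ //; apply: addr_ge0.
Qed.

Lemma packable_of_labels (s : seq rat) (a : seq nat) (m : nat) :
  size s = size a -> all (fun b => b < m)%N a ->
  (forall i, (i < size s)%N -> bin_load (take i s) (take i a) (nth 0%N a i) < 1) ->
  packable s m.
Proof.
move=> eq_sz /allP a_lt prefix_lt; apply/existsP.
have lab_lt (j : 'I_(size s)) : (nth 0%N a j < m)%N.
  by apply/a_lt/mem_nth; rewrite -eq_sz.
exists [ffun j => Ordinal (lab_lt j)]; apply/forallP => i.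
apply: le_lt_trans (prefix_lt i (ltn_ord i)).
have i_le : (i <= size s)%N by apply: ltnW.
rewrite bin_loadE; last by rewrite !size_takel // -eq_sz.
rewrite size_takel // big_mkord.
rewrite (big_ord_widen_cond (size s) (fun j => nth 0%N (take i a) j == nth 0%N a i)
  (fun j => (take i s)`_j) i_le).
rewrite le_eqVlt; apply/orP; left; apply/eqP; apply: eq_big => j.
  by rewrite !ffunE andbC; case: ltnP => lt_ji; rewrite ?andbF ?andbT ?nth_take.
by case/andP=> lt_ji _; rewrite nth_take.
Qed.

Lemma bin_load_take_le (s : seq rat) (a : seq nat) (i t : nat) :
  size s = size a -> (forall w, w \in s -> 0 <= w) ->
  bin_load (take i s) (take i a) t <= bin_load s a t.
Proof.
move=> eq_sz s_ge0.
rewrite -{2}(cat_take_drop i s) -{2}(cat_take_drop i a) bin_load_cat; last first.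
  by rewrite !size_take eq_sz.
by rewrite lerDl; apply: bin_load_ge0 => w /mem_drop; apply: s_ge0.
Qed.

Lemma count_take_nth_lt [p : seq nat] [j : nat] : (j < size p)%N ->
  (count_mem (nth 0%N p j) (take j p) < count_mem (nth 0%N p j) p)%N.
Proof.
move=> lt_j; set t := nth 0%N p j.
rewrite -{2}(cat_take_drop j p) count_cat (drop_nth 0%N lt_j) -/t /= eqxx.
by rewrite add1n addnS ltnS leq_addr.
Qed.

Lemma bin_load_take_add_last [s : seq rat] [a p : seq nat] [x : rat] [i : nat] :
  size s = size a -> (forall w, w \in s -> 0 <= w) -> 0 <= x -> {subset a <= p} ->
  (i < size a + size p)%N ->
  bin_load (take i (s ++ nseq (size p) x)) (take i (a ++ p)) (nth 0%N (a ++ p) i) + x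
    <= bin_load (s ++ nseq (size p) x) (a ++ p) (nth 0%N (a ++ p) i).
Proof.
move=> eq_sz s_ge0 x_ge0 sub_ap lt_i.
rewrite bin_load_cat // (bin_load_nseq x p) !take_cat eq_sz nth_cat.
case: ltnP => [lt_ia | le_ai].
  have in_p : nth 0%N a i \in p by apply/sub_ap/mem_nth.
  have cnt_ge1 : 1 <= (count_mem (nth 0%N a i) p)%:R :> rat.
    by rewrite ler1n -has_count has_pred1.
  apply: lerD; first exact: bin_load_take_le.
  by rewrite -{1}[x]mulr1 ler_wpM2l.
have lt_j : (i - size a < size p)%N by rewrite ltn_subLR.
rewrite bin_load_cat ?size_take ?eq_sz // take_nseq ?(ltnW lt_j) //.
have cnt_lt := count_take_nth_lt lt_j; set j := (i - size a)%N in cnt_lt *.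
rewrite -[X in nseq X x](size_takel (ltnW lt_j)) bin_load_nseq -addrA lerD2l.
rewrite -(ler_nat rat) -addn1 natrD in cnt_lt.
nra.
Qed.

Lemma bin_load_batches (ws : seq rat) (p : seq nat) (t : nat) :
  bin_load (flatten [seq nseq (size p) w | w <- ws]) (flatten (nseq (size ws) p)) t
    = (\sum_(w <- ws) w) * (count_mem t p)%:R.
Proof.
elim: ws => [|w ws IH]; first by rewrite /bin_load big_nil big_nil mul0r.
by rewrite /= bin_load_cat ?size_nseq // bin_load_nseq IH big_cons mulrDl.
Qed.

Lemma size_flatten_nseq (T : Type) (r : nat) (s : seq T) :
  size (flatten (nseq r s)) = (r * size s)%N.
Proof. by elim: r => //= r IH; rewrite size_cat IH mulSn. Qed.

Lemma count_flatten_nseq (T : Type) (P : pred T) (r : nat) (s : seq T) :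
  count P (flatten (nseq r s)) = (r * count P s)%N.
Proof. by elim: r => //= r IH; rewrite count_cat IH mulSn. Qed.

Lemma mem_flatten_nseq (T : eqType) (r : nat) (s : seq T) (x : T) :
  (x \in flatten (nseq r s)) = (0 < r)%N && (x \in s).
Proof. by rewrite -!has_pred1 !has_count count_flatten_nseq muln_gt0. Qed.

Definition rounds (r n : nat) : seq nat := flatten (nseq r (iota 0 n)).

Lemma size_rounds (r n : nat) : size (rounds r n) = (r * n)%N.
Proof. by rewrite size_flatten_nseq size_iota. Qed.

Lemma count_mem_rounds (r n t : nat) : count_mem t (rounds r n) = (r * (t < n))%N.
Proof. by rewrite count_flatten_nseq count_uniq_mem ?iota_uniq // mem_iota. Qed.

Lemma mem_rounds (r n t : nat) : (t \in rounds r n) = (0 < r)%N && (t < n)%N.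
Proof. by rewrite mem_flatten_nseq mem_iota. Qed.

Definition early_pattern (Q G : nat) : seq nat := rounds (6 * G) (7 * Q) ++ rounds 6 Q.

Definition last_pattern (Q G : nat) : seq nat := rounds (6 * G) (7 * Q) ++ iota Q (6 * Q).

Lemma size_early_pattern (Q G : nat) :
  size (early_pattern Q G) = (Q * (6 * (7 * G + 1)))%N.
Proof. by rewrite size_cat !size_rounds; lia. Qed.

Lemma size_last_pattern (Q G : nat) :
  size (last_pattern Q G) = (Q * (6 * (7 * G + 1)))%N.
Proof. by rewrite size_cat size_rounds size_iota; lia. Qed.

Lemma count_mem_early_pattern (Q G t : nat) :
  count_mem t (early_pattern Q G) = (6 * G * (t < 7 * Q) + 6 * (t < Q))%N.
Proof. by rewrite count_cat !count_mem_rounds. Qed.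

Lemma count_mem_last_pattern (Q G t : nat) :
  count_mem t (last_pattern Q G) = (6 * G * (t < 7 * Q) + (Q <= t < 7 * Q))%N.
Proof.
by rewrite count_cat count_mem_rounds count_uniq_mem ?iota_uniq // mem_iota -mulSn.
Qed.

Lemma mem_early_pattern (Q G t : nat) : t \in early_pattern Q G -> (t < 7 * Q)%N.
Proof. by rewrite mem_cat !mem_rounds => /orP [] /andP [_]; lia. Qed.

Lemma mem_last_pattern (Q G t : nat) : (0 < G)%N ->
  (t \in last_pattern Q G) = (t < 7 * Q)%N.
Proof.
move=> G_gt0; rewrite mem_cat mem_rounds mem_iota muln_gt0 G_gt0 /=.
by case: ltnP => //= le_t; apply/negbTE; lia.
Qed.

Lemma load_patterns_lt [S x : rat] [Q G t : nat] :
  (0 < G)%N -> 0 <= S -> 6 * S < x -> 7 * G%:R * x = 1 -> (t < 7 * Q)%N ->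
  S * (count_mem t (early_pattern Q G))%:R + x * (count_mem t (last_pattern Q G))%:R
    < 1 + x.
Proof.
move=> lt0G S_ge0 S_lt Gx lt_t.
have G_gt0 : 0 < G%:R :> rat by rewrite ltr0n.
rewrite count_mem_early_pattern count_mem_last_pattern lt_t.
case: ltnP => _ /=; rewrite !natrD !natrM /= ?mulr1 ?mulr0 ?addr0.
- have : 0 < (x - 6 * S) * (G%:R + 1) by rewrite mulr_gt0 ?subr_gt0 ?addr_gt0.
  nra.
- have : 0 < (x - 6 * S) * G%:R by rewrite mulr_gt0 ?subr_gt0.
  nra.
Qed.

Lemma packable_batches (Q G : nat) [ws : seq rat] [x : rat] :
  (forall w, w \in ws -> 0 <= w) -> 6 * \sum_(w <- ws) w < x -> 7 * G%:R * x = 1 ->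
  packable (flatten [seq nseq (Q * (6 * (7 * G + 1))) w | w <- rcons ws x]) (7 * Q).
Proof.
move=> ws_ge0 ws_small Gx.
have G_gt0 : (0 < G)%N.
  by case: G Gx => // /eqP; rewrite mulr0 mul0r eq_sym oner_eq0.
have sum_ge0 : 0 <= \sum_(w <- ws) w by rewrite big_seq sumr_ge0.
have x_ge0 : 0 <= x by lra.
set E := early_pattern Q G; set L := last_pattern Q G.
set s := flatten [seq nseq (size E) w | w <- ws]; set a := flatten (nseq (size ws) E).
have s_ge0 w : w \in s -> 0 <= w.
  case/flattenP=> _ /mapP [v v_in ->].
  by rewrite mem_nseq => /andP [_ /eqP ->]; apply: ws_ge0.
have size_sa : size s = size a.
  rewrite /s size_flatten_nseq; elim: (ws) => //= w ws' IH.
  by rewrite size_cat size_nseq IH mulSn.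
have a_sub_L : {subset a <= L}.
  by move=> t; rewrite mem_flatten_nseq mem_last_pattern // => /andP [_ /mem_early_pattern].
rewrite map_rcons flatten_rcons -(size_early_pattern Q G) -/E -/s.
rewrite [X in nseq X x](_ : size E = size L); last first.
  by rewrite size_early_pattern size_last_pattern.
apply: (@packable_of_labels _ (a ++ L)); first by rewrite !size_cat size_sa size_nseq.
  by apply/allP => t; rewrite mem_cat -(mem_last_pattern Q G t G_gt0) => /orP [/a_sub_L|].
rewrite size_cat size_nseq size_sa => i lt_i.
have := bin_load_take_add_last size_sa s_ge0 x_ge0 a_sub_L lt_i.
set t := nth 0%N (a ++ L) i.
have lt_t : (t < 7 * Q)%N.
  have := @mem_nth _ 0%N (a ++ L) i; rewrite size_cat mem_cat -/t => /(_ lt_i).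
  by rewrite -(mem_last_pattern Q G t G_gt0) => /orP [/a_sub_L|].
rewrite bin_load_cat // bin_load_nseq bin_load_batches.
have := load_patterns_lt G_gt0 sum_ge0 ws_small Gx lt_t.
lra.
Qed.

Lemma OPT_le [s : seq rat] [m : nat] : packable s m -> (OPT s <= m)%N.
Proof. by rewrite /OPT; case: ex_minnP => n _ min_n /min_n. Qed.

Lemma sum_inv_pow7 (m n : nat) :
  6 * \sum_(e <- iota m.+1 n) ((7%:R ^+ e)^-1 : rat) = (7%:R ^+ m)^-1 - (7%:R ^+ (m + n))^-1.
Proof.
elim: n m => [|n IH] m; first by rewrite big_nil mulr0 addn0 subrr.
rewrite /= big_cons mulrDr IH addSnnS exprS invrM ?unitfE ?expf_neq0 //.
set u := (7%:R ^+ m)^-1; have -> : (7%:R : rat)^-1 = 1 / 7 by rewrite div1r.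
lra.
Qed.

Lemma batch_seqE (M N k : nat) : batch_seq M N k =
  flatten [seq nseq M w | w <- rcons [seq (7%:R ^+ e)^-1 | e <- rev (iota k.+1 (N - k))]
                                     ((7%:R ^+ k)^-1 : rat)].
Proof. by rewrite /batch_seq addn1 /= rev_cons !map_rcons -map_comp. Qed.

Theorem mainTheorem10 (M N : nat) :
  (3 <= M)%N -> (3 <= N)%N -> ((7 ^ N.+1)`! %| M)%N ->
  forall k : nat, (1 <= k)%N -> (k <= N)%N ->
    ((OPT (batch_seq M N k))%:R : rat) <=
      (7 * M%:R) / (6 * ((7%:R ^+ k : rat) + 1)).
Proof.
move=> _ _ dvd_M [//|k] _ lt_kN.
set G := (7 ^ k)%N.
have [Q ->] : exists Q, M = (Q * (6 * (7 * G + 1)))%N.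
  apply/dvdnP/(dvdn_trans _ dvd_M)/dvdn_fact; rewrite addn1 muln_gt0 /=.
  have : (7 ^ k.+1 <= 7 ^ N)%N by rewrite leq_pexp2l.
  by rewrite [(7 ^ N.+1)%N]expnS expnS -/G; lia.
set ws := [seq ((7%:R ^+ e)^-1 : rat) | e <- rev (iota k.+2 (N - k.+1))].
have ws_ge0 w : w \in ws -> 0 <= w by case/mapP=> e _ ->; rewrite invr_ge0 exprn_ge0.
have ws_small : 6 * \sum_(w <- ws) w < (7%:R ^+ k.+1)^-1.
  by rewrite big_map big_rev sum_inv_pow7 gtrBl invr_gt0 exprn_gt0.
have G7 : (7 * G)%:R = 7%:R ^+ k.+1 :> rat by rewrite -natrX expnS.
have Gx : 7 * G%:R * (7%:R ^+ k.+1)^-1 = 1 :> rat.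
  by rewrite -natrM G7 mulfV // expf_neq0.
have D_gt0 : 0 < 6 * (7%:R ^+ k.+1 + 1) :> rat by rewrite mulr_gt0 // ltr_wpDl ?exprn_ge0.
have := OPT_le (packable_batches Q G ws_ge0 ws_small Gx).
rewrite -batch_seqE -(ler_nat rat) => /le_trans; apply.
by rewrite !natrM natrD G7 mulrA mulfK // gt_eqF.
Qed.
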